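(* Let $G$ be a finite group and $n$ a nonnegative integer. Then: (a) if $G$ has exactly $n$ irrational conjugacy classes, then $G$ has at most $\frac{n^2}{2}$ irrational irreducible characters; (b) if $G$ has exactly $n$ irrational irreducible characters, then $G$ has at most $\frac{n^2}{2}$ irrational conjugacy classes.
   Context: A conjugacy class $K$ of a finite group $G$ is irrational if $\chi(K) \notin \mathbb{Q}$ for some complex irreducible character $\chi$ of $G$. An irreducible character $\chi$ is irrational if some value of $\chi$ is not in $\mathbb{Q}$. *)

From mathcomp Require Import all_boot all_order all_algebra all_fingroup all_solvable all_field all_character.
Set Implicit Arguments.
Unset Strict Implicit.
Unset Printing Implicit Defensive.
Import GRing.Theory Num.Theory.
Local Open Scope ring_scope.
Local Open Scope group_scope.

Definition irrational_class (gT : finGroupType) (G : {group gT}) (K : {set gT}) : bool :=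
  [exists i : Iirr G, ('chi[G]_i (repr K) \notin Crat)%R].

Definition irrational_char (gT : finGroupType) (G : {group gT}) (i : Iirr G) : bool :=
  [exists x in G, ('chi[G]_i x \notin Crat)%R].

Definition n_irr_classes (gT : finGroupType) (G : {group gT}) : nat :=
  #|[set K in classes G | irrational_class G K]|.

Definition n_irr_chars (gT : finGroupType) (G : {group gT}) : nat :=
  #|[set i : Iirr G | irrational_char i]|.

From mathcomp Require Import all_boot all_order all_algebra all_fingroup all_solvable all_field all_character.
From mathcomp Require Import zify boolp.
Set Implicit Arguments.
Unset Strict Implicit.
Unset Printing Implicit Defensive.
Import GRing.Theory Num.Theory.

(* Galois conjugation, by the automorphisms of algC, splits the irrational
   irreducible characters S and the irrational classes T into orbits of size at
   least 2.  The characters in S are orthonormal; the difference of two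
   conjugate ones vanishes on the rational classes and is orthogonal to the
   indicator of the union of T, so these differences span a subspace of
   dimension less than |T|.  Adding one character per orbit gives
   |S| <= (|T| - 1) + |S|/2, i.e. |S| + 2 <= 2|T|, whence 2|S| <= |T|^2.
   Dually, the class indicators of T, normalised by the class sizes, are
   orthogonal, and the differences of conjugate ones lie in the span of S and
   are orthogonal to the sum of the characters in S. *)

Lemma double_leq_sqr m n : (m + 2 <= 2 * n)%N -> (2 * m <= n ^ 2)%N.
Proof.
move=> le_m_n; suff: (4 * n <= n ^ 2 + 4)%N by lia.
by have [n_lt2 | n_ge2] := ltnP n 2; nia.
Qed.

Lemma double_card_partition_leq (T : finType) (Q : {set {set T}}) (P : {set T}) :
  partition Q P -> {in Q, forall B : {set T}, 1 < #|B|} -> (2 * #|Q| <= #|P|)%N.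
Proof.
move=> partQ Q_ge2; rewrite (card_partition partQ) mulnC -sum_nat_const.
exact: leq_sum.
Qed.

Local Open Scope group_scope.
Local Open Scope ring_scope.

Section OrthogonalFamilies.

Variables (gT : finGroupType) (G : {group gT}).

Lemma dimv_lt_orthogonal (X : seq 'CF(G)) (Y : {vspace 'CF(G)}) w :
  (<<X>> <= Y)%VS -> w \in Y -> w != 0 -> orthogonal X w -> (\dim <<X>> < \dim Y)%N.
Proof.
move=> sXY Yw nz_w oXw; rewrite (ltn_leqif (dimv_leqif_sup sXY)).
apply: contra nz_w => /subvP/(_ w Yw) Xw.
by rewrite -cfnorm_eq0 (span_orthogonal oXw Xw) ?memv_span1.
Qed.

Variables (I : finType) (P : {set I}) (v : I -> 'CF(G)).
Variables (R : rel I) (Y : {vspace 'CF(G)}) (w : 'CF(G)).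
Hypotheses (v_orth : {in P &, forall i j, i != j -> '[v i, v j] = 0})
           (v_neq0 : {in P, forall i, v i != 0}).

Lemma dim_span_orthogonal : \dim <<[seq v i | i in P]>> = #|P|.
Proof.
have v_inj : {in P &, injective v}.
  move=> i j Pi Pj eq_v; apply: contraTeq (v_neq0 Pi) => neq_ij.
  by rewrite negbK -cfnorm_eq0 {2}eq_v v_orth.
have /eqnP-> : free [seq v i | i in P].
  apply: orthogonal_free; apply/pairwise_orthogonalP; split.
    rewrite /= map_inj_in_uniq ?enum_uniq ?andbT; last first.
      by move=> i j; rewrite !mem_enum; apply: v_inj.
    by apply/imageP => -[i Pi /esym/eqP]; apply/negP/v_neq0.
  move=> _ _ /imageP[i Pi ->] /imageP[j Pj ->] neq_v.
  by apply: v_orth => //; apply: contra_neq neq_v => ->.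
by rewrite size_image.
Qed.

Hypotheses (R_equiv : {in P & &, equivalence_rel R})
           (R_partner : {in P, forall i, exists2 j, j \in P & (j != i) && R i j})
           (R_subY : {in P &, forall i j, R i j -> v i - v j \in Y})
           (R_orth : {in P &, forall i j, R i j -> '[v i - v j, w] = 0})
           (Yw : w \in Y) (nz_w : w != 0).

Lemma card_orthogonal_family_leq_dim : (#|P| + 2 <= 2 * \dim Y)%N.
Proof.
pose Q := equivalence_partition R P.
have partQ : partition Q P := equivalence_partitionP R_equiv.
have [/eqP covQ tiQ nQ0] := and3P partQ.
pose X := transversal Q P.
have trX : is_transversal X Q P := transversalP partQ.
pose rep i := transversal_repr i X (pblock Q i).
have sXP := subsetP (transversal_sub trX).
have repP : {in P, forall i, rep i \in X /\ R i (rep i)}.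
  move=> i Pi; have QBi : pblock Q i \in Q by rewrite pblock_mem ?covQ.
  have Xr : rep i \in X := repr_mem_transversal trX i QBi.
  split=> //; rewrite -(pblock_equivalence_partition R_equiv) ?(sXP _ Xr) //.
  exact: repr_mem_pblock trX _ _ QBi.
pose diffs := [seq v i - v (rep i) | i in P].
have sDY : (<<diffs>> <= Y)%VS.
  apply/span_subvP => _ /imageP[i Pi ->]; have [Xr Rr] := repP i Pi.
  by apply: R_subY => //; apply: sXP.
have oDw : orthogonal diffs w.
  apply/orthoPr => _ /imageP[i Pi ->]; have [Xr Rr] := repP i Pi.
  by apply: R_orth => //; apply: sXP.
have ltDY := dimv_lt_orthogonal sDY Yw nz_w oDw.
have leP : (#|P| <= \dim <<diffs>> + #|Q|)%N.
  rewrite -dim_span_orthogonal -(card_transversal trX) -(size_image v X).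
  apply: leq_trans (leq_add (leqnn _) (dim_span _)).
  apply: leq_trans (dimv_add_leqif _ _).1; apply: dimvS.
  apply/span_subvP => _ /imageP[i Pi ->]; have [Xr _] := repP i Pi.
  by rewrite -(subrK (v (rep i)) (v i)) memv_add ?memv_span ?image_f.
have leQ : (2 * #|Q| <= #|P|)%N.
  apply: double_card_partition_leq partQ _ => B QB.
  have /set0Pn[i Bi] : B != set0 by apply: contraNneq nQ0 => <-.
  have Pi : i \in P by rewrite -covQ; apply/bigcupP; exists B.
  have [j Pj /andP[ji Rij]] := R_partner Pi.
  apply/card_gt1P; exists i, j; split; rewrite 1?eq_sym //.
  by rewrite -(def_pblock tiQ QB Bi) pblock_equivalence_partition.
lia.
Qed.

End OrthogonalFamilies.

Definition aut_conj (I T : Type) (F : I -> T -> algC) : rel I :=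
  fun a b => `[< exists u : {rmorphism algC -> algC}, forall t, F b t = u (F a t)>].

Lemma aut_conjP (I T : Type) (F : I -> T -> algC) a b :
  reflect (exists u : {rmorphism algC -> algC}, forall t, F b t = u (F a t))
          (aut_conj F a b).
Proof. exact: asboolP. Qed.

Lemma aut_conj_equiv (I T : Type) (F : I -> T -> algC) : equivalence_rel (aut_conj F).
Proof.
have trans a b c : aut_conj F a b -> aut_conj F b c -> aut_conj F a c.
  move=> /aut_conjP[u Fab] /aut_conjP[u' Fbc]; apply/aut_conjP.
  by exists (u' \o u)%FUN => t; rewrite Fbc Fab.
have sym a b : aut_conj F a b -> aut_conj F b a.
  move=> /aut_conjP[u Fab]; apply/aut_conjP.
  by exists (algC_invaut u) => t; rewrite Fab /= algC_autK.
move=> a b c; split; first by apply/aut_conjP; exists idfun.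
by move=> Fab; apply/idP/idP => [/(trans _ _ _ (sym _ _ Fab)) | /(trans _ _ _ Fab)].
Qed.

Section GaloisAction.

Variables (gT : finGroupType) (G : {group gT}).

(* The values of phi lie in a cyclotomic field, which is Galois over Q. *)
Lemma char_notin_Crat_aut (phi : 'CF(G)) x :
  phi \is a character -> phi x \notin Crat ->
  exists u : {rmorphism algC -> algC}, u (phi x) != phi x.
Proof.
move=> Nphi /negP irr_phi; apply: contra_notP irr_phi => fixed_phi.
have [Gx | /cfun0->] := boolP (x \in G); last exact: Crat0.
have [Qn galQn [QnC gQnC [_ _ QnG]]] := group_num_field_exists G.
have [a Da] := QnG _ G _ Nphi x (order_dvdG Gx).
have : a \in fixedField ('Gal({:Qn} / 1))%g.
  apply/fixedFieldP; first exact: memvf.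
  move=> nuQn _; have [nu Dnu] := gQnC nuQn; apply: (fmorph_inj QnC).
  rewrite Dnu Da; apply/eqP; apply: contra_notT fixed_phi => moved.
  by exists nu.
rewrite (galois_fixedField galQn) => /vlineP[c Dc].
by rewrite -Da Dc rmorphZ_num rmorph1 mulr1 Crat_rat.
Qed.

(* On <[x]>, phi is a sum of linear characters, whose values are #|G|-th roots
   of unity; u raises these to a fixed power k. *)
Lemma char_aut_expg (u : {rmorphism algC -> algC}) :
  exists k, forall phi : 'CF(G), phi \is a character ->
    {in G, forall x, u (phi x) = phi (x ^+ k)%g}.
Proof.
have [z prim_z] := C_prim_root_exists (cardG_gt0 G).
have uzG : u z ^+ #|G| = 1 by rewrite -rmorphXn /= prim_expr_order ?rmorph1.
have [k Dk] := prim_rootP prim_z uzG.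
have u_root t : t ^+ #|G| = 1 -> u t = t ^+ k.
  by move=> tG; have [j ->] := prim_rootP prim_z tG; rewrite rmorphXn /= Dk -!exprM mulnC.
exists k => phi Nphi x Gx.
pose H := <[x]>%G; have sHG : H \subset G by rewrite cycle_subG.
have Hx : x \in H := cycle_id x.
rewrite -(cfResE _ sHG Hx) -(cfResE _ sHG (groupX k Hx)).
rewrite (cfun_sum_cfdot ('Res[H] phi)).
rewrite !sum_cfunE rmorph_sum; apply: eq_bigr => j _.
have /natrP[c ->] := Cnat_cfdot_char_irr j (cfRes_char H Nphi).
rewrite !cfunE rmorphM rmorph_nat /=; congr (_ * _).
have lin_j := char_abelianP _ (cycle_abelian x) j.
rewrite (lin_charX lin_j _ Hx) u_root //.
have /dvdnP[q ->] := order_dvdG Gx.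
by rewrite mulnC exprM (lin_char_unity_root lin_j Hx) expr1n.
Qed.

Lemma aut_class_exists (u : {rmorphism algC -> algC}) K : K \in classes G ->
  exists2 L, L \in classes G & forall i, 'chi[G]_i (repr L) = u ('chi_i (repr K)).
Proof.
case/repr_classesP=> GrK _; have [k Dk] := char_aut_expg u.
exists ((repr K ^+ k) ^: G); first by rewrite mem_classes ?groupX.
by move=> i; rewrite cfun_repr Dk ?irr_char.
Qed.

End GaloisAction.

Section IrrationalCounts.

Variables (gT : finGroupType) (G : {group gT}).

Lemma cfdot_cfuni_on (A : {set gT}) (phi : 'CF(G)) :
  A <| G -> phi \in 'CF(G, A) -> '[phi, '1_A] = '[phi, 1].
Proof.
move=> nsAG Aphi; rewrite !(cfdotEl _ Aphi); congr (_ * _).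
apply: eq_bigr => x Ax; rewrite cfuniE // cfun1E Ax.
by rewrite (subsetP (normal_sub nsAG)).
Qed.

Lemma irrational_classE x :
  irrational_class G (x ^: G) = [exists i : Iirr G, 'chi_i x \notin Crat].
Proof. by apply: eq_existsb => i; rewrite cfun_repr. Qed.

Lemma irrational_char0 : irrational_char (0 : Iirr G) = false.
Proof. by apply/exists_inP => -[x Gx]; rewrite irr0 cfun1E Gx rpred_nat. Qed.

Lemma irrational_char_aut u (i : Iirr G) :
  irrational_char (aut_Iirr u i) = irrational_char i.
Proof. by apply: eq_existsb => x; rewrite aut_IirrE cfunE Crat_aut. Qed.

Lemma rational_char_Crat (i : Iirr G) x : ~~ irrational_char i -> 'chi_i x \in Crat.
Proof.
move=> /exists_inPn rat_i; have [Gx | /cfun0->] := boolP (x \in G); last exact: Crat0.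
by rewrite -[_ \in Crat]negbK rat_i.
Qed.

Let irrational_elts := [set x in G | [exists i : Iirr G, 'chi_i x \notin Crat]].

Lemma irrational_elts_normal : irrational_elts <| G.
Proof.
apply/andP; split; first by apply/subsetP => x /setIdP[].
apply/subsetP => g Gg; rewrite inE; apply/subsetP => _ /imsetP[x /setIdP[Gx irr_x] ->].
rewrite inE groupJ //=; apply: etrans irr_x; apply: eq_existsb => i.
by rewrite cfunJ.
Qed.

Lemma dim_cfun_on_irrational_elts : \dim 'CF(G, irrational_elts) = n_irr_classes G.
Proof.
rewrite dim_cfun_on; apply: eq_card => K; rewrite !inE.
apply: andb_id2l => /imsetP[x Gx ->].
rewrite class_sub_norm ?normal_norm ?irrational_elts_normal //.
by rewrite inE Gx irrational_classE.
Qed.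

Lemma irrational_chars_bound :
  n_irr_classes G != 0%N -> (n_irr_chars G + 2 <= 2 * n_irr_classes G)%N.
Proof.
move=> nz_classes; rewrite -dim_cfun_on_irrational_elts.
have nsAG := irrational_elts_normal.
pose conj_chi := aut_conj (fun i : Iirr G => 'chi[G]_i).
have diff_on i j : conj_chi i j -> 'chi_i - 'chi_j \in 'CF(G, irrational_elts).
  case/aut_conjP=> u Dchi_j; apply/cfun_onP => x.
  have [Gx | /cfun0-> //] := boolP (x \in G).
  rewrite inE Gx => /existsPn/(_ i); rewrite negbK => Qx.
  by rewrite !cfunE Dchi_j aut_Crat ?subrr.
apply: (card_orthogonal_family_leq_dim (v := fun i => 'chi_i) (R := conj_chi)
                                       (w := '1_irrational_elts)).
- by move=> i j _ _ /negPf ne_ij; rewrite cfdot_irr ne_ij.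
- by move=> i _; apply: irr_neq0.
- exact: in3W (aut_conj_equiv _).
- move=> i; rewrite inE => Si; have /exists_inP[x Gx irr_x] := Si.
  have [u moved] := char_notin_Crat_aut (irr_char i) irr_x.
  exists (aut_Iirr u i); first by rewrite inE irrational_char_aut.
  apply/andP; split; last by apply/aut_conjP; exists u => y; rewrite aut_IirrE cfunE.
  by apply: contraNneq moved => Du; rewrite -{2}Du aut_IirrE cfunE.
- by move=> i j _ _; apply: diff_on.
- move=> i j; rewrite !inE => Si Sj /diff_on Aij.
  have nz_irr (k : Iirr G) : irrational_char k -> (k == 0) = false.
    by apply: contraTF => /eqP->; rewrite irrational_char0.
  by rewrite cfdot_cfuni_on // -irr0 cfdotBl !cfdot_irr !nz_irr ?subrr.
- exact: cfuni_on.
- have /set0Pn[_ /setIdP[/imsetP[x Gx ->] irr_x]] :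
      [set K in classes G | irrational_class G K] != set0 by rewrite -cards_eq0.
  have : ('1_irrational_elts : 'CF(G)) x = 1.
    by rewrite cfuniE // inE Gx -irrational_classE irr_x.
  by apply: contra_eq_neq => ->; rewrite cfunE eq_sym oner_neq0.
Qed.

Definition class_avg (K : {set gT}) : 'CF(G) := (#|K|%:R)^-1 *: '1_K.

Lemma cfdot_class_avg phi K :
  K \in classes G -> '[phi, class_avg K] = #|G|%:R^-1 * phi (repr K).
Proof.
case/imsetP=> x Gx ->; rewrite cfun_repr cfdotZr (cfdotEr _ (cfuni_on G _)).
rewrite fmorphV rmorph_nat (eq_bigr (fun=> phi x)) => [|_ /imsetP[y Gy ->]].
  rewrite sumr_const -[phi x *+ _]mulr_natl mulrCA; congr (_ * _).
  rewrite mulKf // pnatr_eq0 -lt0n card_gt0.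
  by apply/set0Pn; exists x; apply: class_refl.
by rewrite cfunJ // cfun_classE Gx memJ_class // conjC1 mulr1.
Qed.

Lemma class_avg_neq0 K : K \in classes G -> class_avg K != 0.
Proof.
case/imsetP=> x Gx ->; apply/eqP => /cfunP/(_ x)/eqP.
rewrite !cfunE cfun_classE Gx class_refl mulr1 invr_eq0 pnatr_eq0 cards_eq0.
by move=> /eqP xG0; have := class_refl G x; rewrite xG0 inE.
Qed.

Lemma cfdot_class_avg_eq0 K L :
  K \in classes G -> L \in classes G -> K != L -> '[class_avg K, class_avg L] = 0.
Proof.
move=> /imsetP[x Gx ->] CL neKL; have [_ DL] := repr_classesP CL.
rewrite cfdot_class_avg // !cfunE cfun_classE Gx.
suff /negPf-> : repr L \notin x ^: G by rewrite !mulr0.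
by apply: contra neKL => /class_eqP <-; rewrite -DL.
Qed.

Lemma irrational_classes_bound :
  n_irr_chars G != 0%N -> (n_irr_classes G + 2 <= 2 * n_irr_chars G)%N.
Proof.
move=> nz_chars; pose S := [set i : Iirr G | irrational_char i].
pose Y := <<[seq 'chi[G]_i | i in S]>>%VS; pose w := \sum_(i in S) 'chi[G]_i.
have dimY : (\dim Y <= n_irr_chars G)%N by rewrite (leq_trans (dim_span _)) ?size_image.
apply: leq_trans (leq_mul (leqnn 2) dimY).
pose conj_class := aut_conj (fun (K : {set gT}) (i : Iirr G) => 'chi[G]_i (repr K)).
have cfdot_avgB K L phi : K \in classes G -> L \in classes G ->
    '[class_avg K - class_avg L, phi]
      = (#|G|%:R^-1 * (phi (repr K) - phi (repr L)))^*.
  by move=> CK CL; rewrite cfdotC cfdotBr !cfdot_class_avg // -mulrBr.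
apply: (card_orthogonal_family_leq_dim (v := class_avg) (R := conj_class)
                                       (Y := Y) (w := w)).
- by move=> K L; rewrite !inE => /andP[CK _] /andP[CL _]; apply: cfdot_class_avg_eq0.
- by move=> K; rewrite inE => /andP[CK _]; apply: class_avg_neq0.
- exact: in3W (aut_conj_equiv _).
- move=> K; rewrite inE => /andP[CK /existsP[i irr_i]].
  have [u moved] := char_notin_Crat_aut (irr_char i) irr_i.
  have [L CL DL] := aut_class_exists u CK.
  exists L; first by rewrite inE CL; apply/existsP; exists i; rewrite DL Crat_aut.
  apply/andP; split; last by apply/aut_conjP; exists u.
  by apply: contraNneq moved => DK; rewrite -DL DK.
- move=> K L; rewrite !inE => /andP[CK _] /andP[CL _] /aut_conjP[u DL].
  rewrite (cfun_sum_cfdot (_ - _)) (bigID (mem S)) /= [X in _ + X]big1 ?addr0.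
    by apply: memv_suml => i Si; rewrite memvZ // memv_span ?image_f.
  move=> i; rewrite inE => /rational_char_Crat rat_i.
  by rewrite cfdot_avgB // DL aut_Crat // subrr mulr0 conjC0 scale0r.
- move=> K L; rewrite !inE => /andP[CK _] /andP[CL _] /aut_conjP[u DL].
  rewrite cfdot_avgB // !sum_cfunE.
  have -> : \sum_(i in S) 'chi_i (repr L) = \sum_(i in S) 'chi_i (repr K).
    rewrite [RHS](reindex_inj (aut_Iirr_inj u)) /=.
    apply: eq_big => [i | i _]; first by rewrite !inE irrational_char_aut.
    by rewrite DL aut_IirrE cfunE.
  by rewrite subrr mulr0 conjC0.
- by apply: memv_suml => i Si; rewrite memv_span ?image_f.
- have /set0Pn[i Si] : S != set0 by rewrite -cards_eq0.
  have : '[w, 'chi_i] = 1.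
    rewrite cfdot_suml (bigD1 i) //= cfdot_irr eqxx big1 ?addr0 // => j /andP[_].
    by move/negPf=> ne_ji; rewrite cfdot_irr ne_ji.
  by apply: contra_eq_neq => ->; rewrite cfdot0l eq_sym oner_neq0.
Qed.

Lemma n_irr_classes_eq0 : (n_irr_classes G == 0%N) = (n_irr_chars G == 0%N).
Proof.
rewrite !cards_eq0; apply: negb_inj; apply/set0Pn/set0Pn => [[K] | [i]]; rewrite !inE.
  case/andP=> /repr_classesP[GrK _] /existsP[i irr_i]; exists i.
  by rewrite inE; apply/exists_inP; exists (repr K).
case/exists_inP=> x Gx irr_x; exists (x ^: G).
by rewrite inE mem_classes //= irrational_classE; apply/existsP; exists i.
Qed.

End IrrationalCounts.

Theorem mainTheorem5 (gT : finGroupType) (G : {group gT}) (n : nat) :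
  (n_irr_classes G = n -> (2 * n_irr_chars G <= n ^ 2)%N) /\
  (n_irr_chars G = n -> (2 * n_irr_classes G <= n ^ 2)%N).
Proof.
have zero_eqv := n_irr_classes_eq0 G.
split=> <-.
  have [z | nz] := eqVneq (n_irr_classes G) 0%N.
    by move: zero_eqv; rewrite z eqxx => /esym/eqP->.
  exact/double_leq_sqr/irrational_chars_bound.
have [z | nz] := eqVneq (n_irr_chars G) 0%N.
  by move: zero_eqv; rewrite z eqxx => /eqP->.
exact/double_leq_sqr/irrational_classes_bound.
Qed.
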